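(* For all integers $m\geq 1$ and $q\geq 1$, the graph $m*Q_q$ divides $Q_{mq}$.
   Context: $Q_q$ denotes the $q$-dimensional hypercube graph (vertices are $q$-tuples of $0$'s and $1$'s, adjacent iff they differ in exactly one coordinate). For a graph $G$ and positive integer $m$, the $m$-stretch $m*G$ is the graph obtained from $G$ by replacing each edge by a path of length $m$ (with $m$ edges), these paths being internally vertex-disjoint. For graphs $H$ and $G$, ''$H$ divides $G$'' means there is a collection of subgraphs $H_i$ of $G$, each isomorphic to $H$, such that $E(G)$ is the disjoint union of the edge sets $E(H_i)$. *)

(* Finite simple graphs are given as a finType of vertices
   together with a (symmetric, irreflexive) boolean adjacency relation. *)
From mathcomp Require Import all_boot.
Set Implicit Arguments. Unset Strict Implicit. Unset Printing Implicit Defensive.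

Definition cube_vert (q : nat) : finType := {ffun 'I_q -> bool}.

Definition cube_adj (q : nat) : rel (cube_vert q) :=
  fun x y => #|[set i : 'I_q | x i != y i]| == 1.

(* Raw vertices: original vertices (inl v), and internal vertices
   inr (u, v, k) = k-th internal vertex (1 <= k <= m-1) of the path replacing
   the edge uv, where each edge is represented once by u before v in the
   enumeration order of V. *)
Definition stretch_raw (V : finType) (m : nat) : finType :=
  (V + (V * V * 'I_m.+1))%type.

Definition stretch_valid (V : finType) (e : rel V) (m : nat)
  (x : stretch_raw V m) : bool :=
  match x with
  | inl _ => true
  | inr (u, v, k) => [&& e u v, enum_rank u < enum_rank v, 0 < k & k < m]
  end.

Definition stretch_vert (V : finType) (e : rel V) (m : nat) : finType :=
  {x : stretch_raw V m | stretch_valid e x}.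

Definition stretch_pt (V : finType) (m : nat) (u v : V) (k : nat)
  : stretch_raw V m :=
  if k == 0 then inl u else if k == m then inl v else inr (u, v, inord k).

Definition stretch_adj (V : finType) (e : rel V) (m : nat)
  : rel (stretch_vert e m) :=
  fun x y =>
    [exists u : V, exists v : V, exists k : 'I_m,
      [&& e u v, enum_rank u < enum_rank v &
        ((val x == stretch_pt m u v k) && (val y == stretch_pt m u v k.+1))
        || ((val y == stretch_pt m u v k) && (val x == stretch_pt m u v k.+1))]].

Definition edge_set (V : finType) (e : rel V) : {set {set V}} :=
  [set s : {set V} | [exists x : V, exists y : V, e x y && (s == [set x; y])]].

Definition img_edges (VH VG : finType) (eH : rel VH) (f : VH -> VG)
  : {set {set VG}} :=
  [set s : {set VG} |
    [exists x : VH, exists y : VH, eH x y && (s == [set f x; f y])]].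

(* H divides G: there are finitely many subgraphs H_i of G, each isomorphic
   to H (H_i = image of an injective edge-preserving map F i, with edge set
   exactly the image of E(H)), whose edge sets partition E(G). *)
Definition divides (VH VG : finType) (eH : rel VH) (eG : rel VG) : Prop :=
  exists (k : nat) (F : 'I_k -> VH -> VG),
    [/\ forall i, injective (F i),
        forall i x y, eH x y -> eG (F i x) (F i y),
        forall i j, i != j -> [disjoint img_edges eH (F i) & img_edges eH (F j)]
      & edge_set eG = \bigcup_(i < k) img_edges eH (F i)].

Arguments cube_adj q : clear implicits.
Arguments stretch_adj {V} e m.

(* Index the coordinates of Q_(mq) by pairs (j, l) : 'I_q * 'I_m (column j, layer l).
   Blowing up each vertex x of Q_q to the vertex equal to x_j on column j, and each edge
   of Q_q in direction j to the walk flipping the m layers of column j one at a time, in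
   increasing or in decreasing layer order, embeds m*Q_q in Q_(mq); so does every
   translate of this embedding by a vector c. Keep the translates with c zero on layer 0
   and with parity (decreasing order && m odd). Then an edge of Q_(mq) determines its copy:
   off the edge's column c is read off layer 0, the order is read off the layer-0 entry of
   the edge's column (layer 0 comes first in one order and last in the other), and the
   parity of c decides which endpoint comes first on the walk.  Edges flipping layer 0
   itself are the exception: there the endpoint is forced and the parity fixes the order. *)

From mathcomp Require Import all_boot zify.
Set Implicit Arguments. Unset Strict Implicit. Unset Printing Implicit Defensive.

(** * Hypercubes over an arbitrary index type *)

Section Hypercube.
Variable T : finType.
Implicit Types (x y w c : {ffun T -> bool}) (a b : T).

Definition hcube : rel {ffun T -> bool} := fun x y => #|[set i | x i != y i]| == 1.

Definition flip x a : {ffun T -> bool} := [ffun i => x i (+) (i == a)].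
Definition xorv x y : {ffun T -> bool} := [ffun i => x i (+) y i].
Definition par x : bool := \big[addb/false]_i x i.

Lemma flipE x a i : flip x a i = x i (+) (i == a).
Proof. exact: ffunE. Qed.

Lemma flipK a : involutive (flip^~ a).
Proof. by move=> x; apply/ffunP=> i; rewrite !ffunE -addbA addbb addbF. Qed.

Lemma flip_neq x a : flip x a != x.
Proof. by apply/eqP=> /ffunP/(_ a); rewrite ffunE eqxx addbT; case: (x a). Qed.

Lemma flip_flip_eq x a b : flip (flip x a) b = x -> a = b.
Proof.
move/ffunP/(_ a); rewrite !ffunE eqxx.
by case: (x a); case: eqP.
Qed.

Lemma flip_inj x : injective (flip x).
Proof. by move=> a b e; apply: (@flip_flip_eq (flip x a)); rewrite flipK e. Qed.

Lemma hcubeP x y : reflect (exists a, y = flip x a) (hcube x y).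
Proof.
apply: (iffP cards1P) => [[a ha]|[a ->]]; exists a.
  apply/ffunP=> i; rewrite ffunE; move/setP/(_ i): ha; rewrite !inE.
  by case: (x i); case: (y i); case: (i == a).
by apply/setP=> i; rewrite !inE ffunE; case: (x i); case: (i == a).
Qed.

Lemma hcube_flip x a : hcube x (flip x a).
Proof. by apply/hcubeP; exists a. Qed.

Lemma hcube_sym : symmetric hcube.
Proof.
by move=> x y; apply/hcubeP/hcubeP=> -[a ->]; exists a; rewrite flipK.
Qed.

Lemma xorvK c : involutive (xorv c).
Proof. by move=> x; apply/ffunP=> i; rewrite !ffunE addKb. Qed.

Lemma xorv_flip c x a : xorv c (flip x a) = flip (xorv c x) a.
Proof. by apply/ffunP=> i; rewrite !ffunE addbA. Qed.

Lemma par_xorv x y : par (xorv x y) = par x (+) par y.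
Proof. by rewrite /par -big_split; apply: eq_bigr => i _; rewrite ffunE. Qed.

Lemma par_flip x a : par (flip x a) = ~~ par x.
Proof.
rewrite /par -addbT (eq_bigr (fun i => x i (+) (i == a))) => [|i _]; last by rewrite ffunE.
rewrite big_split /=; congr addb.
by rewrite (bigD1 a) //= eqxx big1 // => i /negbTE.
Qed.

Lemma edge_flipP w a w' a' :
  [set w; flip w a] = [set w'; flip w' a'] -> a' = a /\ (w' = w \/ w' = flip w a).
Proof.
move=> E; have : w' \in [set w; flip w a] by rewrite E set21.
case/set2P=> ew'; subst w'; split; [|by left| |by right].
- have : flip w a' \in [set w; flip w a] by rewrite E set22.
  by case/set2P=> [/eqP|/flip_inj //]; rewrite (negbTE (flip_neq _ _)).
- have : flip (flip w a) a' \in [set w; flip w a] by rewrite E set22.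
  by case/set2P=> [/flip_flip_eq //|/eqP]; rewrite (negbTE (flip_neq _ _)).
Qed.

End Hypercube.

Arguments hcube : clear implicits.

Lemma par_pair (I J : finType) (x : {ffun I * J -> bool}) :
  par x = \big[addb/false]_i \big[addb/false]_j x (i, j).
Proof. by rewrite pair_bigA; apply: eq_bigr => -[]. Qed.

(** * Relabelling the target graph *)

Section DividesIso.
Variables (VH VG VG' : finType) (eH : rel VH) (eG : rel VG) (eG' : rel VG').
Variable g : VG -> VG'.
Hypotheses (g_bij : bijective g) (g_mono : {mono g : x y / eG x y >-> eG' x y}).

Lemma img_edges_comp (f : VH -> VG) :
  img_edges eH (g \o f) = [set g @: s | s : {set VG} in img_edges eH f].
Proof.
apply/setP=> s; apply/idP/imsetP.
  rewrite inE => /existsP[x /existsP[y /andP[exy /eqP ->]]].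
  exists [set f x; f y]; last by rewrite imsetU1 imset_set1.
  by rewrite inE; apply/existsP; exists x; apply/existsP; exists y; rewrite exy eqxx.
case=> _ /[!inE] /existsP[x /existsP[y /andP[exy /eqP ->]]] ->.
by apply/existsP; exists x; apply/existsP; exists y; rewrite exy imsetU1 imset_set1 eqxx.
Qed.

Lemma edge_set_iso : edge_set eG' = [set g @: s | s : {set VG} in edge_set eG].
Proof.
have [g' gK g'K] := g_bij.
apply/setP=> s; apply/idP/imsetP.
  rewrite inE => /existsP[x /existsP[y /andP[exy /eqP ->]]].
  exists [set g' x; g' y]; last by rewrite imsetU1 imset_set1 !g'K.
  rewrite inE; apply/existsP; exists (g' x); apply/existsP; exists (g' y).
  by rewrite -g_mono !g'K exy eqxx.
case=> _ /[!inE] /existsP[x /existsP[y /andP[exy /eqP ->]]] ->.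
apply/existsP; exists (g x); apply/existsP; exists (g y).
by rewrite g_mono exy imsetU1 imset_set1 eqxx.
Qed.

Lemma divides_iso : divides eH eG -> divides eH eG'.
Proof.
case=> k [F [Finj Fadj Fdisj Fcover]]; exists k, (fun i => g \o F i); split.
- by move=> i; apply: inj_comp (Finj i); apply: bij_inj.
- by move=> i x y exy; rewrite /= g_mono Fadj.
- move=> i j ij; rewrite !img_edges_comp imset_disjoint ?Fdisj //.
  exact/imset_inj/bij_inj.
apply/setP=> s; rewrite edge_set_iso Fcover.
apply/imsetP/bigcupP=> [[s0 /bigcupP[i _ s0i] ->]|[i _]].
  by exists i => //; rewrite img_edges_comp imset_f.
by rewrite img_edges_comp => /imsetP[s0 s0i ->]; exists s0 => //; apply/bigcupP; exists i.
Qed.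

End DividesIso.

Lemma hcube_reindex (T T' : finType) (h : T' -> T) : bijective h ->
  {mono (fun x : {ffun T -> bool} => [ffun i => x (h i)]) : x y / hcube T x y >-> hcube T' x y}.
Proof.
case=> h' hK h'K x y; rewrite /hcube -(card_imset _ (can_inj h'K)).
congr (_ == 1); apply: eq_card => i; rewrite inE !ffunE.
apply/idP/imsetP=> [ne|[i' /[!inE] + ->]]; last by rewrite h'K.
by exists (h i); rewrite ?inE ?hK.
Qed.

Lemma divides_hcube_card (VH T T' : finType) (eH : rel VH) :
  #|T| = #|T'| -> divides eH (hcube T) -> divides eH (hcube T').
Proof.
move=> cardT; pose h (i : T') : T := enum_val (cast_ord (esym cardT) (enum_rank i)).
have h_bij : bijective h.
  exists (fun i => enum_val (cast_ord cardT (enum_rank i))) => i.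
    by rewrite /h enum_valK cast_ordKV enum_rankK.
  by rewrite /h enum_valK cast_ordK enum_rankK.
apply: divides_iso (hcube_reindex h_bij).
have [h' hK h'K] := h_bij.
by exists (fun x : {ffun T' -> bool} => [ffun i => x (h' i)]) => x;
  apply/ffunP=> i; rewrite !ffunE ?hK ?h'K.
Qed.

(** * Layer orders and prefix points *)

Section Construction.
Variables p q : nat.
Local Notation n := p.+1.
Local Notation Vq := {ffun 'I_q -> bool}.
Local Notation V := {ffun 'I_q * 'I_n -> bool}.

Definition layer_rank (b : bool) (l : 'I_n) : 'I_n := if b then rev_ord l else l.

Definition in_prefix (b : bool) (lam : nat) (l : 'I_n) : bool := layer_rank b l < lam.

Lemma layer_rankK b : involutive (layer_rank b).
Proof. by case: b => l //=; rewrite rev_ordK. Qed.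

Lemma in_prefix_full b l : in_prefix b n l.
Proof. exact: ltn_ord. Qed.

Lemma in_prefixS b lam l :
  in_prefix b lam.+1 l = in_prefix b lam l (+) (layer_rank b l == lam :> nat).
Proof. by rewrite /in_prefix ltnS leq_eqVlt; case: ltngtP. Qed.

Lemma in_prefix_inj b lam1 lam2 :
  lam1 <= n -> lam2 <= n -> in_prefix b lam1 =1 in_prefix b lam2 -> lam1 = lam2.
Proof.
wlog lt12 : lam1 lam2 / lam1 < lam2 => [hw le1 le2 e|_ le2].
  by case: (ltngtP lam1 lam2) => // lt; [apply: hw | symmetry; apply: hw].
move/(_ (layer_rank b (Ordinal (leq_trans lt12 le2)))).
by rewrite /in_prefix layer_rankK /= ltnn lt12.
Qed.

Lemma in_prefix_ord0 b t : in_prefix b (layer_rank b t) ord0 = (t != ord0) && ~~ b.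
Proof.
case: t => t lt_t; case: b; rewrite /in_prefix -val_eqE /= ?lt0n.
  by rewrite andbF; apply/negbTE; rewrite -leqNgt leq_sub2l.
by rewrite andbT.
Qed.

Lemma big_in_prefix b lam : lam <= n -> \big[addb/false]_l in_prefix b lam l = odd lam.
Proof.
elim: lam => [|lam IH] lt_lam; first by rewrite big1.
rewrite (eq_bigr _ (fun l _ => in_prefixS b lam l)) big_split /= (IH (ltnW lt_lam)).
pose l0 := layer_rank b (Ordinal lt_lam).
rewrite (bigD1 l0) //= /l0 layer_rankK eqxx big1 ?addbT // => l.
apply: contraNF => /eqP e; rewrite /l0.
have -> : Ordinal lt_lam = layer_rank b l by apply: val_inj.
by rewrite layer_rankK.
Qed.

Lemma odd_rank_ord0 b : odd (layer_rank b ord0) = b && odd p.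
Proof. by case: b => //=; rewrite subn1. Qed.

Definition prefix_point b (x : Vq) j lam : V :=
  [ffun i => if i.1 == j then in_prefix b lam i.2 else x i.1].

Lemma prefix_pointS b x j l :
  prefix_point b x j (layer_rank b l).+1 = flip (prefix_point b x j (layer_rank b l)) (j, l).
Proof.
apply/ffunP=> -[j' l']; rewrite !ffunE /= in_prefixS xpair_eqE.
have [ej|_] := eqVneq j' j; last by rewrite addbF.
subst j' => /=.
by rewrite (inj_eq val_inj) (inj_eq (can_inj (layer_rankK b))).
Qed.

Lemma prefix_point_eq_off b (x x' : Vq) j lam :
  (forall j', j' != j -> x j' = x' j') -> prefix_point b x j lam = prefix_point b x' j lam.
Proof.
move=> e; apply/ffunP=> -[j' l]; rewrite !ffunE /=.
by have [//|/e] := eqVneq j' j.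
Qed.

Lemma layer_rank_onto b lam : lam < n -> exists l, layer_rank b l = lam :> nat.
Proof. by move=> lt_lam; exists (layer_rank b (Ordinal lt_lam)); rewrite layer_rankK. Qed.

Lemma prefix_point_inj b (x x' : Vq) j j' lam lam' :
  0 < lam < n -> lam' <= n -> prefix_point b x j lam = prefix_point b x' j' lam' ->
  [/\ j' = j, lam' = lam & forall k, k != j -> x k = x' k].
Proof.
case/andP=> lam_gt0 lam_lt lam'_le e.
have at_ i : prefix_point b x j lam i = prefix_point b x' j' lam' i by rewrite e.
have [l1 e1] := layer_rank_onto b (ltn0Sn p).
have [l2 e2] := layer_rank_onto b lam_lt.
have low1 : in_prefix b lam l1 by rewrite /in_prefix e1.
have low2 : in_prefix b lam l2 = false by rewrite /in_prefix e2 ltnn.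
have ej : j' = j.
  apply/eqP; apply: contraTT low1 => ne.
  move: (at_ (j, l1)) (at_ (j, l2)); rewrite !ffunE /= eqxx eq_sym (negbTE ne).
  by move=> -> <-; rewrite low2.
subst j'; split=> // [|k ne].
  apply: esym; apply: (in_prefix_inj (b := b)) => [||l]; first exact: ltnW.
    exact: lam'_le.
  by move: (at_ (j, l)); rewrite !ffunE /= eqxx.
by move: (at_ (k, ord0)); rewrite !ffunE /= (negbTE ne).
Qed.

Lemma par_prefix_point b b' x j lam lam' : lam <= n -> lam' <= n ->
  par (prefix_point b x j lam) (+) par (prefix_point b' x j lam') = odd lam (+) odd lam'.
Proof.
move=> le_lam le_lam'; rewrite -par_xorv par_pair (bigD1 j) //= [X in _ (+) X]big1 => [|j' ne].
  rewrite addbF (eq_bigr (fun l => in_prefix b lam l (+) in_prefix b' lam' l)) => [|l _].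
    by rewrite big_split /= !big_in_prefix.
  by rewrite !ffunE /= eqxx.
by rewrite big1 // => l _; rewrite !ffunE /= (negbTE ne) addbb.
Qed.

Definition blowup (x : Vq) : V := [ffun i => x i.1].

Lemma blowup_inj : injective blowup.
Proof. by move=> x y e; apply/ffunP=> j; move/ffunP/(_ (j, ord0)): e; rewrite !ffunE. Qed.

Lemma blowup_prefix_point b x j : blowup x = prefix_point b x j (if x j then n else 0).
Proof.
apply/ffunP=> -[j' l]; rewrite !ffunE /=.
have [->|//] := eqVneq j' j.
by case: (x j); rewrite ?in_prefix_full.
Qed.

(** * The copies of m*Q_q *)

Local Notation SV := (stretch_vert (cube_adj q) n).

Definition path_point b (u v : Vq) k : V :=
  [ffun i => if u i.1 == v i.1 then u i.1 else in_prefix b (if u i.1 then n - k else k) i.2].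

Definition base_embed b (r : stretch_raw (cube_vert q) n) : V :=
  match r with inl x => blowup x | inr (u, v, k) => path_point b u v k end.

Definition embed b (c : V) (x : SV) : V := xorv c (base_embed b (val x)).

Lemma path_point_flip b u j k :
  path_point b u (flip u j) k = prefix_point b u j (if u j then n - k else k).
Proof.
apply/ffunP=> -[j' l]; rewrite !ffunE /=.
have [->|ne] := eqVneq j' j; first by case: (u j).
by rewrite addbF eqxx.
Qed.

Lemma base_embed_pt b u v k :
  k <= n -> base_embed b (stretch_pt n u v k) = path_point b u v k.
Proof.
rewrite /stretch_pt; case: eqP => [-> _|_]; last case: eqP => [-> _|_ le_k].
- by apply/ffunP=> i; rewrite !ffunE; case: eqP => //; case: (u i.1); rewrite ?in_prefix_full.
- apply/ffunP=> i; rewrite !ffunE subnn; case: eqP => [//|].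
  by case: (u i.1); case: (v i.1); rewrite ?in_prefix_full.
by rewrite /= inordK.
Qed.

Lemma base_embed_flip b u j k : k <= n ->
  base_embed b (stretch_pt n u (flip u j) k) = prefix_point b u j (if u j then n - k else k).
Proof. by move=> le_k; rewrite base_embed_pt // path_point_flip. Qed.

Definition copy_edge b (c : V) x j lam : {set V} :=
  [set xorv c (prefix_point b x j lam); xorv c (prefix_point b x j lam.+1)].

Lemma embed_edge b c (x y : SV) : stretch_adj (cube_adj q) n x y ->
  exists u j lam, lam < n /\
    let e k := xorv c (prefix_point b u j k) in
    (embed b c x, embed b c y) = (e lam, e lam.+1) \/
    (embed b c x, embed b c y) = (e lam.+1, e lam).
Proof.
case/existsP=> u /existsP[v /existsP[k /and3P[/hcubeP[j ->] _ xy]]].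
have lt_k := ltn_ord k.
exists u, j, (if u j then n - k.+1 else k); split; first by case: (u j); lia.
rewrite /embed; case/orP: xy => /andP[/eqP -> /eqP ->] /=;
  rewrite !base_embed_flip ?(ltnW lt_k) // -(subnSK lt_k).
  by case: (u j); [right|left].
by case: (u j); [left|right].
Qed.

Lemma embed_adj b c (x y : SV) :
  stretch_adj (cube_adj q) n x y -> hcube _ (embed b c x) (embed b c y).
Proof.
case/(embed_edge b c) => u [j [lam [/(layer_rank_onto b)[l <-] /=]]].
rewrite prefix_pointS xorv_flip; case=> -[-> ->]; first exact: hcube_flip.
by rewrite hcube_sym hcube_flip.
Qed.

Lemma stretch_pt_valid (u v : Vq) k :
  cube_adj q u v -> enum_rank u < enum_rank v -> k <= n ->
  stretch_valid (cube_adj q) (stretch_pt n u v k).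
Proof.
rewrite /stretch_pt => uv lt_uv le_k; case: eqP => // k_neq0; case: eqP => //= k_neqn.
by rewrite uv lt_uv inordK; lia.
Qed.

Lemma stretch_pt_edge_in_img b c u j k :
  enum_rank u < enum_rank (flip u j) -> k < n ->
  [set xorv c (base_embed b (stretch_pt n u (flip u j) k));
       xorv c (base_embed b (stretch_pt n u (flip u j) k.+1))]
    \in img_edges (stretch_adj (cube_adj q) n) (embed b c).
Proof.
move=> lt_u lt_k; have uv : cube_adj q u (flip u j) := hcube_flip u j.
pose sv k' (le_k' : k' <= n) : SV := Sub _ (stretch_pt_valid uv lt_u le_k').
rewrite inE; apply/existsP; exists (sv k (ltnW lt_k)); apply/existsP; exists (sv k.+1 lt_k).
rewrite eqxx andbT; apply/existsP; exists u; apply/existsP; exists (flip u j).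
by apply/existsP; exists (Ordinal lt_k); rewrite uv lt_u !eqxx.
Qed.

Lemma copy_edge_in_img b c x j lam : lam < n ->
  copy_edge b c x j lam \in img_edges (stretch_adj (cube_adj q) n) (embed b c).
Proof.
move=> lt_lam; pose u0 : Vq := [ffun j' => (j' != j) && x j']; pose u1 := flip u0 j.
have point_u0 k : prefix_point b x j k = prefix_point b u0 j k.
  by apply: prefix_point_eq_off => j' ne; rewrite ffunE ne.
have point_u1 k : prefix_point b x j k = prefix_point b u1 j k.
  by rewrite point_u0; apply: prefix_point_eq_off => j' ne; rewrite [u1 j']ffunE (negbTE ne) addbF.
case: (ltngtP (enum_rank u0) (enum_rank u1)) => [lt01|lt10|e01].
- have := stretch_pt_edge_in_img b c lt01 lt_lam.
  by rewrite !base_embed_flip ?(ltnW lt_lam) // /u0 ffunE eqxx /= -/u0 -!point_u0.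
- have lt_k : n - lam.+1 < n by lia.
  have lt1 : enum_rank u1 < enum_rank (flip u1 j) by rewrite /u1 flipK.
  have := stretch_pt_edge_in_img b c lt1 lt_k.
  rewrite !base_embed_flip ?(ltnW lt_k) // /u1 /u0 !ffunE eqxx /= -/u0 -/u1 -!point_u1.
  have -> : n - (n - lam.+1) = lam.+1 by lia.
  have -> : n - (n - lam.+1).+1 = lam by lia.
  by rewrite /copy_edge setUC.
by have := flip_neq u0 j; rewrite -/u1 -(enum_rank_inj (ord_inj e01)) eqxx.
Qed.

Lemma img_edges_embedP b c s :
  reflect (exists x j lam, lam < n /\ s = copy_edge b c x j lam)
          (s \in img_edges (stretch_adj (cube_adj q) n) (embed b c)).
Proof.
apply: (iffP idP) => [|[x [j [lam [lt_lam ->]]]]]; last exact: copy_edge_in_img.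
rewrite inE => /existsP[x /existsP[y /andP[xy /eqP ->]]].
have [u [j [lam [lt_lam [[-> ->]|[-> ->]]]]]] := embed_edge b c xy;
  by exists u, j, lam; rewrite /copy_edge 1?setUC.
Qed.

Lemma stretch_validP r : stretch_valid (cube_adj q) r ->
  (exists x, r = inl x) \/
  exists u j (k : 'I_n.+1),
    [/\ r = inr (u, flip u j, k), enum_rank u < enum_rank (flip u j) & 0 < k < n].
Proof.
case: r => [x _|[[u v] k] /and4P[/hcubeP[j ->] lt_u k_gt0 k_lt]]; first by left; exists x.
by right; exists u, j, k; rewrite k_gt0 k_lt.
Qed.

Lemma blowup_neq_path_point b x u j k : 0 < k < n -> blowup x != path_point b u (flip u j) k.
Proof.
move=> k_bd; apply/eqP; rewrite path_point_flip (blowup_prefix_point b x j).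
case/esym/prefix_point_inj => [||_]; [by case: (u j); lia | by case: (x j) |].
by case: (x j); case: (u j); lia.
Qed.

Lemma path_point_inj b u1 u2 j1 j2 k1 k2 :
  enum_rank u1 < enum_rank (flip u1 j1) -> enum_rank u2 < enum_rank (flip u2 j2) ->
  0 < k1 < n -> 0 < k2 < n ->
  path_point b u1 (flip u1 j1) k1 = path_point b u2 (flip u2 j2) k2 ->
  [/\ u1 = u2, j1 = j2 & k1 = k2].
Proof.
move=> lt1 lt2 k1_bd k2_bd; rewrite !path_point_flip.
case/prefix_point_inj => [||ej e_lam e_off]; [by case: (u1 j1); lia | by case: (u2 j2); lia |].
subst j2; have [e1|ne1] := eqVneq (u1 j1) (u2 j1).
  have eu : u1 = u2 by apply/ffunP=> j; have [->|/e_off] := eqVneq j j1.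
  by subst u2; split=> //; move: e_lam; case: (u1 j1); lia.
have eu : u2 = flip u1 j1.
  apply/ffunP=> j; rewrite ffunE; have [->|/e_off <-] := eqVneq j j1; last by rewrite addbF.
  by move: ne1; case: (u1 j1); case: (u2 j1).
by move: lt2; rewrite eu flipK => /(ltn_trans lt1); rewrite ltnn.
Qed.

Lemma base_embed_inj b : {in @stretch_valid _ (cube_adj q) n &, injective (base_embed b)}.
Proof.
move=> r1 r2 /stretch_validP[[x1 ->]|[u1 [j1 [k1 [-> lt1 k1_bd]]]]]
  /stretch_validP[[x2 ->]|[u2 [j2 [k2 [-> lt2 k2_bd]]]]] /= e.
- by rewrite (blowup_inj e).
- by have := blowup_neq_path_point b x1 u2 j2 k2_bd; rewrite e eqxx.
- by have := blowup_neq_path_point b x2 u1 j1 k1_bd; rewrite e eqxx.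
by case: (path_point_inj lt1 lt2 k1_bd k2_bd e) => -> -> /val_inj ->.
Qed.

Lemma embed_inj b c : injective (embed b c).
Proof.
move=> x y /(can_inj (xorvK c)) e; apply: val_inj.
exact: base_embed_inj (valP x) (valP y) e.
Qed.

(** * Decoding the copy of an edge *)

Definition layer0 (w : V) : Vq := [ffun j => w (j, ord0)].

Definition edge_shift b (w : V) (a : 'I_q * 'I_n) : V :=
  xorv w (prefix_point b (layer0 w) a.1 (layer_rank b a.2)).

Lemma edge_shift_flip b w a : edge_shift b (flip w a) a = flip (edge_shift b w a) a.
Proof.
case: a => j0 t; apply/ffunP=> -[j l]; rewrite !ffunE /= !xpair_eqE.
have [->|ne] := eqVneq j j0; first by rewrite /= addbAC.
by rewrite !andFb !addbF.
Qed.

Lemma edge_shift_ord0 b w j0 t j : edge_shift b w (j0, t) (j, ord0) =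
  (j == j0) && (w (j, ord0) (+) (t != ord0) && ~~ b).
Proof.
rewrite !ffunE /=; have [->|ne] := eqVneq j j0; first by rewrite in_prefix_ord0.
by rewrite addbb.
Qed.

Lemma par_edge_shift b b' w a :
  par (edge_shift b w a) (+) par (edge_shift b' w a) =
  odd (layer_rank b a.2) (+) odd (layer_rank b' a.2).
Proof. by rewrite !par_xorv addbACA addbb par_prefix_point ?(ltnW (ltn_ord _)). Qed.

Lemma edge_shift_of_copy b (c : V) x j l : (forall j', ~~ c (j', ord0)) ->
  edge_shift b (xorv c (prefix_point b x j (layer_rank b l))) (j, l) = c.
Proof.
move=> c0; apply/ffunP=> -[j' l']; rewrite !ffunE /=.
have [->|ne] := eqVneq j' j; first by rewrite addbK.
by rewrite (negbTE (c0 j')) addbK.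
Qed.

Lemma copy_edge_shift b w a :
  copy_edge b (edge_shift b w a) (layer0 w) a.1 (layer_rank b a.2) = [set w; flip w a].
Proof.
case: a => j t; rewrite /copy_edge /= prefix_pointS xorv_flip.
suff -> : xorv (edge_shift b w (j, t)) (prefix_point b (layer0 w) j (layer_rank b t)) = w by [].
by apply/ffunP=> i; rewrite !ffunE addbK.
Qed.

(* Translating by a blown-up vector only relabels a copy, hence the normalisation on
   layer 0; the parity condition then leaves exactly one copy through each edge. *)
Definition admissible (bc : bool * V) : bool :=
  [forall j, ~~ bc.2 (j, ord0)] && (par bc.2 == bc.1 && odd n).

Definition edge_order (w : V) (a : 'I_q * 'I_n) : bool :=
  if a.2 == ord0 then par (edge_shift false w a) (+) w a else ~~ w (a.1, ord0).

(* The shifts read off the two endpoints differ in one coordinate: the copy's shift is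
   the one of admissible parity. *)
Definition copy_of_edge (w : V) a : bool * V :=
  let b := edge_order w a in let c := edge_shift b w a in
  (b, if par c == b && odd n then c else flip c a).

Lemma edge_order_flip w a : edge_order (flip w a) a = edge_order w a.
Proof.
case: a => j t; rewrite /edge_order /=; case: eqP => [->|/eqP t0].
  by rewrite edge_shift_flip par_flip ffunE eqxx addbT; case: (par _); case: (w _).
by rewrite ffunE xpair_eqE eqxx eq_sym (negbTE t0) addbF.
Qed.

Lemma copy_of_edge_flip w a : copy_of_edge (flip w a) a = copy_of_edge w a.
Proof.
rewrite /copy_of_edge edge_order_flip edge_shift_flip par_flip flipK.
by case: (par _); case: (_ && _).
Qed.

Lemma copy_of_edge_par w a : par (copy_of_edge w a).2 = (copy_of_edge w a).1 && odd n.
Proof. by rewrite /=; case: eqP => // /eqP; rewrite par_flip; case: (par _); case: (_ && _). Qed.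

Lemma par_edge_shift_ord0 w j :
  (par (edge_shift (edge_order w (j, ord0)) w (j, ord0)) ==
     edge_order w (j, ord0) && odd n) = ~~ w (j, ord0).
Proof.
have := par_edge_shift (edge_order w (j, ord0)) false w (j, ord0).
rewrite odd_rank_ord0 addbF => /(canRL (addbK _)) ->.
by rewrite /edge_order /=; case: (par _); case: (w _); case: (odd p).
Qed.

Lemma copy_of_edge_ord0 w a j : ~~ (copy_of_edge w a).2 (j, ord0).
Proof.
case: a => j0 t; rewrite /copy_of_edge /=.
have [->|t0] := eqVneq t ord0.
  rewrite par_edge_shift_ord0; case: ifP => wa; rewrite ?flipE edge_shift_ord0 ?xpair_eqE /=.
    by case: eqP => //= ->; rewrite addbF.
  by case: eqP => //= ->; move/negbFE: wa => ->.
have -> : edge_order w (j0, t) = ~~ w (j0, ord0) by rewrite /edge_order /= (negbTE t0).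
case: ifP => _; rewrite ?flipE edge_shift_ord0 ?xpair_eqE /= t0 negbK;
  by case: eqP => //= ->; rewrite addbb // eq_sym (negbTE t0).
Qed.

Lemma copy_of_edge_admissible w a : admissible (copy_of_edge w a).
Proof.
rewrite /admissible copy_of_edge_par eqxx andbT.
by apply/forallP=> j; apply: copy_of_edge_ord0.
Qed.

Lemma copy_of_copy_edge b c x j l : admissible (b, c) ->
  copy_of_edge (xorv c (prefix_point b x j (layer_rank b l))) (j, l) = (b, c).
Proof.
case/andP=> /forallP c0 /eqP par_c; set w := xorv c _.
have c0' j' : ~~ c (j', ord0) by exact: c0.
have order_w : edge_order w (j, l) = b.
  rewrite /edge_order /= !ffunE /= eqxx in_prefix_ord0 (negbTE (c0' j)) /=.
  case: eqP => [l0|_] /=; last by rewrite negbK.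
  have := par_edge_shift false b w (j, l).
  rewrite edge_shift_of_copy // par_c /= l0 odd_rank_ord0 => /(canRL (addbK _)) ->.
  rewrite (negbTE (c0' j)) /in_prefix ltnn.
  by case: (b); case: (odd p).
by rewrite /copy_of_edge order_w edge_shift_of_copy // par_c eqxx.
Qed.

Lemma edge_in_copy_of_edge w a b c : copy_of_edge w a = (b, c) ->
  exists x, [set w; flip w a] = copy_edge b c x a.1 (layer_rank b a.2).
Proof.
rewrite /copy_of_edge => -[<- <-]; case: ifP => _.
  by exists (layer0 w); rewrite copy_edge_shift.
by exists (layer0 (flip w a)); rewrite -edge_shift_flip copy_edge_shift flipK setUC.
Qed.

Lemma img_edges_embed_copyP bc s : admissible bc ->
  reflect (exists w a, s = [set w; flip w a] /\ copy_of_edge w a = bc)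
          (s \in img_edges (stretch_adj (cube_adj q) n) (embed bc.1 bc.2)).
Proof.
case: bc => b c adm; apply: (iffP (img_edges_embedP _ _ _)).
  case=> x [j [lam [/(layer_rank_onto b)[l <-] ->]]].
  exists (xorv c (prefix_point b x j (layer_rank b l))), (j, l).
  by rewrite /copy_edge prefix_pointS xorv_flip copy_of_copy_edge.
case=> w [a [-> /edge_in_copy_of_edge[x ->]]].
by exists x, a.1, (layer_rank b a.2).
Qed.

Lemma stretch_cube_divides_cube_prod :
  divides (stretch_adj (cube_adj q) n) (hcube ('I_q * 'I_n)%type).
Proof.
pose I : finType := {bc : bool * V | admissible bc}; pose copy (i : 'I_#|I|) := val (enum_val i).
have adm i : admissible (copy i) := valP (enum_val i).
exists #|I|, (fun i => embed (copy i).1 (copy i).2); split.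
- by move=> i; apply: embed_inj.
- by move=> i x y; apply: embed_adj.
- move=> i k; apply: contraNT => /pred0Pn[s /andP[]] /=.
  case/(img_edges_embed_copyP _ (adm i)) => w [a [-> e_i]].
  case/(img_edges_embed_copyP _ (adm k)) => w' [a' [/edge_flipP[-> e_w'] e_k]].
  suff e_copy : copy i = copy k by apply/eqP/enum_val_inj/val_inj.
  by rewrite -e_i -e_k; case: e_w' => ->; rewrite ?copy_of_edge_flip.
apply/setP=> s; apply/idP/bigcupP.
  rewrite inE => /existsP[w /existsP[w' /andP[/hcubeP[a ->] /eqP ->]]].
  have adm_e := copy_of_edge_admissible w a.
  exists (enum_rank (Sub _ adm_e : I)) => //.
  by apply/(img_edges_embed_copyP _ (adm _)); exists w, a; rewrite /copy enum_rankK.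
case=> i _ /(img_edges_embed_copyP _ (adm i))[w [a [-> _]]].
by rewrite inE; apply/existsP; exists w; apply/existsP; exists (flip w a); rewrite hcube_flip eqxx.
Qed.

End Construction.

Theorem theorem2 (m q : nat) :
  1 <= m -> 1 <= q ->
  divides (stretch_adj (cube_adj q) m) (cube_adj (m * q)).
Proof.
case: m => // p _ _.
apply: (divides_hcube_card (T := ('I_q * 'I_p.+1)%type)).
  by rewrite card_prod !card_ord mulnC.
exact: stretch_cube_divides_cube_prod.
Qed.
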